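(* Let $g_1,\dots,g_r\in\mathbb R[X_1,\dots,X_n]$ satisfy $1-\|\mathbf X\|_2^2\in\mathcal Q(\mathbf g)$ and $\|g_i\|\le\tfrac12$, with $S=\mathcal S(\mathbf g)\ne\emptyset$. Let $f\in\mathbb R[\mathbf X]$ with $f^*=\min_S f>0$, let $A=\{x\in[-1,1]^n: f(x)\le\frac{3f^*}{4}\}$, and let $0<\delta\le 1$ be such that $G(x)\ge\delta$ for all $x\in A$. Let $k>0$, $m\in\mathbb N$ and let $h_{k,m}\in\mathbb R[T]$ be a univariate polynomial of degree $m$ such that: $1-\frac1k\le h_{k,m}(t)\le1+\frac1k$ for $t\in[-1,-\delta]$; $h_{k,m}(t)\le\frac2k$ for $t\in[0,1]$; $0\le h_{k,m}(t)\le1+\frac1k$ for $t\in[-1,1]$. Let $s>0$. If $$s>\frac{6\|f\|}{\delta},\qquad k>\frac{2r-2}{\delta}+1,\qquad k>\frac{4rs}{f^*},$$ then $p=f-s\sum_{i=1}^r h_{k,m}(g_i)\,g_i$ satisfies $p\ge\frac{f^*}{2}$ on $[-1,1]^n$.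
   Context: $\Sigma^2$ sums of squares, $\mathcal S(\mathbf g)=\{x:g_i(x)\ge0\ \forall i\}$, $\mathcal Q(\mathbf g)=\Sigma^2+\sum_i\Sigma^2g_i$, $\|h\|=\max_{[-1,1]^n}|h|$, $\|\mathbf X\|_2^2=\sum X_i^2$, $G(x)=|\min\{g_1(x),\dots,g_r(x),0\}|$. *)

From HB Require Import structures.
From mathcomp Require Import all_boot all_order all_algebra.
From mathcomp Require Import reals.
From mathcomp Require Import mpoly.
Set Implicit Arguments. Unset Strict Implicit. Unset Printing Implicit Defensive.
Import Order.TTheory GRing.Theory Num.Theory.
Local Open Scope ring_scope.

Section Defs.
Variables (R : realType) (n r : nat).

Definition is_sos (p : {mpoly R[n]}) : Prop :=
  exists s : seq {mpoly R[n]}, p = \sum_(q <- s) q ^+ 2.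

Definition in_qmodule (g : 'I_r -> {mpoly R[n]}) (p : {mpoly R[n]}) : Prop :=
  exists (s0 : {mpoly R[n]}) (s : 'I_r -> {mpoly R[n]}),
    is_sos s0 /\ (forall i, is_sos (s i)) /\ p = s0 + \sum_(i < r) s i * g i.

Definition in_cube (x : 'I_n -> R) : Prop := forall i, -1 <= x i <= 1.

Definition in_S (g : 'I_r -> {mpoly R[n]}) (x : 'I_n -> R) : Prop :=
  forall i, 0 <= (g i).@[x].

(* ||h|| = max_{[-1,1]^n} |h| (a max, realised as the supremum) *)
Definition supnorm (h : {mpoly R[n]}) : R :=
  sup (fun t : R => exists x, in_cube x /\ t = `|h.@[x]|).

Definition sqnormX : {mpoly R[n]} := \sum_(i < n) 'X_i ^+ 2.

Definition Gfun (g : 'I_r -> {mpoly R[n]}) (x : 'I_n -> R) : R :=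
  `| \big[Num.min/0]_(i < r) (g i).@[x] |.

End Defs.

(** On the cube every [|g_i| <= 1/2], so each penalty term [h(g_i) g_i] is at
    most [1/k] ([h <= 2/k] on [[0,1]], [h >= 0] on [[-1,1]]); by the choice of
    [k] the penalty then costs less than [f*/4], which settles the points where
    [f > 3 f*/4].  Elsewhere some [g_j <= -delta], and there [h(g_j) >= 1 - 1/k],
    so that term alone subtracts at least [s (1 - 1/k) delta], more than twice
    what the other [r - 1] terms can add back.  Since [s delta > 6 ||f||], this
    outweighs [||f|| + f*/2 <= 3/2 ||f||]; here [f* <= ||f||] because the
    quadratic module forces [S] into the cube. *)
From HB Require Import structures.
From mathcomp Require Import all_boot all_order all_algebra.
From mathcomp Require Import reals.
From mathcomp Require Import mpoly.
From mathcomp Require Import ring lra.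
Import Order.TTheory GRing.Theory Num.Theory.
Set Implicit Arguments. Unset Strict Implicit.
Local Open Scope ring_scope.

Section RealBounds.
Variable R : realFieldType.

Lemma sum_le_with_one_term (I : finType) (c : I -> R) (a b : R) (j : I) :
  (forall i, c i <= a) -> c j <= b ->
  \sum_i c i <= b + (#|I|%:R - 1) * a.
Proof.
move=> c_le cj_le; rewrite (bigD1 j) //= lerD //.
have : \sum_(i : I) a = #|I|%:R * a by rewrite sumr_const mulr_natl.
rewrite (bigD1 j) //=.
have : \sum_(i | i != j) c i <= \sum_(i | i != j) a by apply: ler_sum.
lra.
Qed.

Section PenaltyTerm.
Variables (phi : R -> R) (k : R).

Lemma penalty_term_le (t : R) : 0 < k ->
  (forall u, 0 <= u <= 1 -> phi u <= 2 / k) ->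
  (forall u, -1 <= u <= 1 -> 0 <= phi u) ->
  `|t| <= 1 / 2 -> phi t * t <= 1 / k.
Proof.
move=> k_gt0 phi_le phi_ge0; rewrite ler_norml => /andP[t_lo t_hi].
have phit_ge0 : 0 <= phi t by apply: phi_ge0; lra.
have a_gt0 : 0 < 1 / k by rewrite divr_gt0.
have [t_ge0|t_lt0] := leP 0 t; last by nra.
have : phi t <= 2 / k by apply: phi_le; lra.
rewrite div1r; move: k^-1 => a; nra.
Qed.

Lemma penalty_term_le_violated (delta t : R) :
  0 <= delta -> 1 <= k ->
  (forall u, -1 <= u <= - delta -> 1 - 1 / k <= phi u) ->
  -1 <= t <= - delta -> phi t * t <= - ((1 - 1 / k) * delta).
Proof.
move=> delta_ge0 k_ge1 phi_ge t_in; have := phi_ge t t_in.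
have : 1 / k <= 1 by rewrite ler_pdivrMr ?mul1r //; lra.
move: t_in (1 / k) => /andP[t_lo t_hi] a; nra.
Qed.

End PenaltyTerm.

Lemma penalized_ge_of_large_value (fstar s k r fx sigma : R) :
  0 < s -> 0 < fstar -> 0 < k -> 4 * r * s / fstar < k ->
  3 * fstar / 4 < fx -> sigma <= r * (1 / k) ->
  fstar / 2 <= fx - s * sigma.
Proof.
move=> s_gt0 fs_gt0 k_gt0; rewrite ltr_pdivrMr // => hk fx_gt.
have a_gt0 : 0 < 1 / k by rewrite divr_gt0.
have ak : 1 / k * k = 1 by rewrite div1r mulVf ?gt_eqF.
move: (1 / k) a_gt0 ak => a a_gt0 ak sigma_le.
have : s * sigma <= s * (r * a) by rewrite ler_pM2l.
nra.
Qed.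

Lemma penalized_ge_of_violation (F fstar s delta k r fx sigma : R) :
  0 < s -> 0 < fstar -> 0 < delta -> delta <= 1 -> 1 <= r -> fstar <= F ->
  6 * F / delta < s -> (2 * r - 2) / delta + 1 < k -> 4 * r * s / fstar < k ->
  - F <= fx -> sigma <= - ((1 - 1 / k) * delta) + (r - 1) * (1 / k) ->
  fstar / 2 <= fx - s * sigma.
Proof.
move=> s_gt0 fs_gt0 d_gt0 d_le1 r_ge1 fs_le.
rewrite ltr_pdivrMr // => hs; rewrite -ltrBrDr ltr_pdivrMr // => hk1.
rewrite ltr_pdivrMr // => hk2 fx_ge sigma_le.
have k_gt0 : 0 < k by nra.
have fs_lt : 6 * fstar < s by nra.
have k_ge2 : 2 <= k by nra.
set B := - ((1 - 1 / k) * delta) + (r - 1) * (1 / k) in sigma_le.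
have kB : k * B = - ((k - 1) * delta) + (r - 1) by rewrite /B; field; rewrite gt_eqF.
have B_le : B <= - (delta / 4).
  by rewrite -(ler_pM2l k_gt0) kB; nra.
have : s * sigma <= s * B by rewrite ler_pM2l.
nra.
Qed.

End RealBounds.

Section Polynomials.
Variables (R : realType) (n : nat).
Implicit Types (p q : {mpoly R[n]}) (x : 'I_n -> R).

Lemma norm_meval_le_sum_coef q x :
  in_cube x -> `|q.@[x]| <= \sum_(m <- msupp q) `|q@_m|.
Proof.
move=> x_cube; rewrite mevalE; apply: le_trans (ler_norm_sum _ _ _) _.
apply: ler_sum => m _; rewrite normrM -[leRHS]mulr1 ler_wpM2l // normr_prod.
apply: prodr_ile1 => i _; rewrite normrX exprn_ge0 //= exprn_ile1 //.
by rewrite ler_norml; exact: x_cube.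
Qed.

Lemma norm_meval_le_supnorm q x : in_cube x -> `|q.@[x]| <= supnorm q.
Proof.
move=> x_cube; apply: ub_le_sup; last by exists x.
exists (\sum_(m <- msupp q) `|q@_m|) => _ [y [y_cube ->]].
exact: norm_meval_le_sum_coef.
Qed.

Lemma sos_meval_ge0 p x : is_sos p -> 0 <= p.@[x].
Proof.
case=> sq ->; rewrite rmorph_sum /=; apply: sumr_ge0 => q _.
by rewrite rmorphXn /= sqr_ge0.
Qed.

Lemma in_cube_of_sqnormX_le1 x : (sqnormX R n).@[x] <= 1 -> in_cube x.
Proof.
rewrite /sqnormX rmorph_sum /= => norm_le1 i.
have : x i ^+ 2 <= 1.
  apply: le_trans norm_le1; rewrite (bigD1 i) //= rmorphXn /= mevalXU lerDl.
  by apply: sumr_ge0 => j _; rewrite rmorphXn /= sqr_ge0.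
by move=> sq_le1; apply/andP; split; nra.
Qed.

End Polynomials.

Section Constraints.
Variables (R : realType) (n r : nat) (g : 'I_r -> {mpoly R[n]}).
Implicit Types (p : {mpoly R[n]}) (x : 'I_n -> R).

Lemma qmodule_meval_ge0 p x : in_qmodule g p -> in_S g x -> 0 <= p.@[x].
Proof.
case=> s0 [s [s0_sos [s_sos ->]]] x_S.
rewrite mevalD rmorph_sum /= addr_ge0 ?sos_meval_ge0 //.
apply: sumr_ge0 => i _; rewrite mevalM.
by apply: mulr_ge0; [exact: sos_meval_ge0 | exact: x_S].
Qed.

Lemma in_cube_of_in_S x :
  in_qmodule g (1 - sqnormX R n) -> in_S g x -> in_cube x.
Proof.
move=> /qmodule_meval_ge0 ge0 /ge0; rewrite mevalB meval1 subr_ge0.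
exact: in_cube_of_sqnormX_le1.
Qed.

Lemma Gfun_ge_violated x delta :
  0 < delta -> delta <= Gfun g x -> exists j, (g j).@[x] <= - delta.
Proof.
move=> delta_gt0; rewrite /Gfun ler0_norm ?bigmin_le_id // lerNr => min_le.
have [j|none] := pickP (fun j => (g j).@[x] <= - delta); first by exists j.
suff : - delta < \big[Num.min/0]_(i < r) (g i).@[x] by rewrite ltNge min_le.
apply/bigmin_gtP; split.
  by rewrite oppr_lt0.
by move=> i _; rewrite ltNge none.
Qed.

End Constraints.

Theorem mainTheorem8 (R : realType) (n r : nat) (g : 'I_r -> {mpoly R[n]})
  (f : {mpoly R[n]}) (fstar delta k : R) (m : nat) (h : {poly R}) (s : R) :
  in_qmodule g (1 - sqnormX R n) ->
  (forall i, supnorm (g i) <= 1 / 2) ->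
  (exists x, in_S g x) ->
  (exists2 x, in_S g x & f.@[x] = fstar) ->
  (forall x, in_S g x -> fstar <= f.@[x]) ->
  0 < fstar ->
  0 < delta -> delta <= 1 ->
  (forall x, in_cube x -> f.@[x] <= 3 * fstar / 4 -> delta <= Gfun g x) ->
  0 < k ->
  size h = m.+1 ->
  (forall t, -1 <= t <= - delta -> 1 - 1 / k <= h.[t] <= 1 + 1 / k) ->
  (forall t, 0 <= t <= 1 -> h.[t] <= 2 / k) ->
  (forall t, -1 <= t <= 1 -> 0 <= h.[t] <= 1 + 1 / k) ->
  0 < s ->
  s > 6 * supnorm f / delta ->
  k > (2 * r%:R - 2) / delta + 1 ->
  k > 4 * r%:R * s / fstar ->
  forall x, in_cube x ->
    fstar / 2 <= f.@[x] - s * \sum_(i < r) h.[(g i).@[x]] * (g i).@[x].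
Proof.
move=> qmod g_small _ [x0 x0_S fx0] _ fs_gt0 d_gt0 d_le1 violated k_gt0 _
  h_violated h_pos h_range s_gt0 s_big k_big1 k_big2 x x_cube.
have g_half i : `|(g i).@[x]| <= 1 / 2.
  exact: le_trans (norm_meval_le_supnorm _ x_cube) (g_small i).
have term_le i : h.[(g i).@[x]] * (g i).@[x] <= 1 / k.
  by apply: penalty_term_le => // u /h_range /andP[].
have fs_le : fstar <= supnorm f.
  rewrite -fx0; apply: le_trans (ler_norm _) _.
  exact: norm_meval_le_supnorm (in_cube_of_in_S qmod x0_S).
have [f_small|f_large] := leP f.@[x] (3 * fstar / 4); last first.
  apply: penalized_ge_of_large_value k_big2 f_large _ => //.
  apply: le_trans (ler_sum _ (fun i _ => term_le i)) _.
  by rewrite sumr_const card_ord mulr_natl.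
have [j gj_le] := Gfun_ge_violated d_gt0 (violated x x_cube f_small).
have r_ge1 : 1 <= r%:R :> R by rewrite ler1n (leq_ltn_trans _ (ltn_ord j)).
apply: (penalized_ge_of_violation _ _ _ _ r_ge1 fs_le s_big k_big1 k_big2) => //.
  by move: (norm_meval_le_supnorm f x_cube); rewrite ler_norml => /andP[].
rewrite -[r in r%:R]card_ord; apply: sum_le_with_one_term term_le _.
apply: penalty_term_le_violated; first exact: ltW.
- apply: le_trans (ltW k_big1); rewrite lerDr divr_ge0 ?(ltW d_gt0) //; lra.
- by move=> u /h_violated /andP[].
- by have := g_half j; rewrite ler_norml; lra.
Qed.
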